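(* Let $\mathcal{F}$ be a class of real functions on $\mathcal{X}$ and $(\mathbf{X}_i,Y_i)_{i=1}^n$ a sample. Let $\widehat g_1,\dots,\widehat g_d$ be $\Delta_1$-empirical risk minimizers in $\mathcal{F}$, and let $\widetilde f$ be an exact empirical risk minimizer over $Star_d(\mathcal{F},\widehat g_1,\dots,\widehat g_d)$. Then for every $h\in\mathcal{F}$, $$\widehat{\mathbb{E}}(h-Y)^2-\widehat{\mathbb{E}}(\widetilde f-Y)^2\ge \frac1{18}\,\widehat{\mathbb{E}}(\widetilde f-h)^2-2\Delta_1.$$
   Context: $\widehat{\mathbb{E}}(f)=\frac1n\sum_{i=1}^n f(\mathbf{X}_i)$ (and $\widehat{\mathbb{E}}(f-Y)^2=\frac1n\sum_i(f(\mathbf{X}_i)-Y_i)^2$). $\widehat g\in\mathcal{G}$ is a $\Delta$-empirical risk minimizer in $\mathcal{G}$ if $\widehat{\mathbb{E}}(\widehat g-Y)^2\le\min_{f\in\mathcal{G}}\widehat{\mathbb{E}}(f-Y)^2+\Delta$. $Star_d(\mathcal{F},\widehat g_1,\dots,\widehat g_d)=\{\sum_{i=1}^d\lambda_i\widehat g_i+(1-\sum_i\lambda_i)f:\lambda_i\in[0,1],\ 1-\sum_i\lambda_i\in[0,1],\ f\in\mathcal{F}\}$. *)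

From mathcomp Require Import all_boot all_order all_algebra.
Set Implicit Arguments. Unset Strict Implicit. Unset Printing Implicit Defensive.
Import Order.TTheory GRing.Theory Num.Theory.
Local Open Scope ring_scope.

Definition emp_mean (R : realFieldType) (n : nat) (v : 'I_n -> R) : R :=
  n%:R^-1 * \sum_(i < n) v i.

Definition emp_risk (R : realFieldType) (T : Type) (n : nat)
  (Xs : 'I_n -> T) (Ys : 'I_n -> R) (f : T -> R) : R :=
  emp_mean (fun i => (f (Xs i) - Ys i) ^+ 2).

Definition emp_dist (R : realFieldType) (T : Type) (n : nat)
  (Xs : 'I_n -> T) (f g : T -> R) : R :=
  emp_mean (fun i => (f (Xs i) - g (Xs i)) ^+ 2).

Definition is_Delta_ERM (R : realFieldType) (T : Type) (n : nat)
  (Xs : 'I_n -> T) (Ys : 'I_n -> R) (G : (T -> R) -> Prop) (Delta : R)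
  (g : T -> R) : Prop :=
  G g /\ forall f, G f -> emp_risk Xs Ys g <= emp_risk Xs Ys f + Delta.

Definition Star (R : realFieldType) (T : Type) (d : nat)
  (F : (T -> R) -> Prop) (g : 'I_d -> T -> R) : (T -> R) -> Prop :=
  fun u => exists (lam : 'I_d -> R) (f : T -> R),
    [/\ forall i, 0 <= lam i <= 1,
        0 <= 1 - \sum_(i < d) lam i <= 1,
        F f &
        u = (fun x => \sum_(i < d) lam i * g i x + (1 - \sum_(i < d) lam i) * f x)].

(* Star_d(F, g_1, ..., g_d) contains the midpoints of g_1 with h and of g_1 with f~.
   The parallelogram identity for the empirical risk turns the optimality of f~ against
   these two midpoints into  R(h) - R(f~) >= |g_1 - h|^2 / 4 - Delta_1 / 2  and
   R(h) - R(f~) >= |f~ - g_1|^2 / 2 - Delta_1, since R(g_1) <= R(h) + Delta_1;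
   the inequality  |f~ - h|^2 <= 2 |f~ - g_1|^2 + 2 |g_1 - h|^2  then combines them. *)

From Stdlib Require Import FunctionalExtensionality.
From mathcomp Require Import all_boot all_order all_algebra.
From mathcomp Require Import ring lra.
Set Implicit Arguments. Unset Strict Implicit. Unset Printing Implicit Defensive.
Import Order.TTheory GRing.Theory Num.Theory.
Local Open Scope ring_scope.

Section EmpiricalMean.
Variables (R : realFieldType) (n : nat).
Implicit Types u v : 'I_n -> R.

Lemma eq_emp_mean u v : u =1 v -> emp_mean u = emp_mean v.
Proof. by move=> eq_uv; rewrite /emp_mean (eq_bigr _ (fun i _ => eq_uv i)). Qed.

Lemma emp_meanD u v : emp_mean (fun i => u i + v i) = emp_mean u + emp_mean v.
Proof. by rewrite /emp_mean big_split mulrDr. Qed.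

Lemma emp_meanB u v : emp_mean (fun i => u i - v i) = emp_mean u - emp_mean v.
Proof. by rewrite /emp_mean sumrB mulrBr. Qed.

Lemma emp_meanZ (a : R) u : emp_mean (fun i => a * u i) = a * emp_mean u.
Proof. by rewrite /emp_mean -mulr_sumr mulrCA. Qed.

Lemma ler_emp_mean u v : (forall i, u i <= v i) -> emp_mean u <= emp_mean v.
Proof.
move=> le_uv; rewrite /emp_mean ler_wpM2l ?invr_ge0 ?ler0n //.
by apply: ler_sum => i _; apply: le_uv.
Qed.

Lemma emp_mean_ge0 u : (forall i, 0 <= u i) -> 0 <= emp_mean u.
Proof.
move=> u_ge0; rewrite /emp_mean mulr_ge0 ?invr_ge0 ?ler0n //.
by apply: sumr_ge0 => i _; apply: u_ge0.
Qed.

End EmpiricalMean.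

Section EmpiricalRisk.
Variables (R : realFieldType) (T : Type) (n : nat) (Xs : 'I_n -> T) (Ys : 'I_n -> R).
Implicit Types a b c : T -> R.

Lemma emp_dist_ge0 a b : 0 <= emp_dist Xs a b.
Proof. by apply: emp_mean_ge0 => i; apply: sqr_ge0. Qed.

Lemma emp_distC a b : emp_dist Xs a b = emp_dist Xs b a.
Proof. by apply: eq_emp_mean => i; rewrite -sqrrN opprB. Qed.

Lemma emp_risk_convex_comb (t : R) a b :
  emp_risk Xs Ys (fun x => t * a x + (1 - t) * b x) =
  t * emp_risk Xs Ys a + (1 - t) * emp_risk Xs Ys b - t * (1 - t) * emp_dist Xs a b.
Proof.
rewrite /emp_risk /emp_dist -!emp_meanZ -emp_meanD -emp_meanB.
by apply: eq_emp_mean => i; ring.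
Qed.

Lemma emp_dist_triangle a b c :
  emp_dist Xs a c <= 2 * emp_dist Xs a b + 2 * emp_dist Xs b c.
Proof.
rewrite /emp_dist -!emp_meanZ -emp_meanD; apply: ler_emp_mean => i.
set u := a (Xs i); set v := b (Xs i); set w := c (Xs i).
have -> : 2 * (u - v) ^+ 2 + 2 * (v - w) ^+ 2 = (u - w) ^+ 2 + (u - 2 * v + w) ^+ 2.
  by ring.
by rewrite lerDl sqr_ge0.
Qed.

Lemma Delta_ERM_ge0 (G : (T -> R) -> Prop) (Delta : R) a :
  is_Delta_ERM Xs Ys G Delta a -> 0 <= Delta.
Proof. by case=> Ga /(_ a Ga); rewrite lerDl. Qed.

End EmpiricalRisk.

Section StarHull.
Variables (R : realFieldType) (T : Type) (d : nat).
Variables (F : (T -> R) -> Prop) (g : 'I_d -> T -> R).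

Lemma Star_class f : F f -> Star F g f.
Proof.
move=> Ff; exists (fun=> 0), f; rewrite big1 // subr0; split => //.
- by move=> i; rewrite lexx ler01.
- by rewrite ler01 lexx.
apply: functional_extensionality => x.
by rewrite big1 ?mul1r ?add0r // => i _; rewrite mul0r.
Qed.

Lemma Star_convex_center (j : 'I_d) (t : R) u : 0 <= t <= 1 ->
  Star F g u -> Star F g (fun x => t * g j x + (1 - t) * u x).
Proof.
move=> /andP[t_ge0 t_le1] [lam [f [lam01 sum01 Ff ->]]].
pose mu i := (if i == j then t else 0) + (1 - t) * lam i.
have sum_mu : \sum_(i < d) mu i = t + (1 - t) * \sum_(i < d) lam i.
  by rewrite big_split /= -big_mkcond big_pred1_eq mulr_sumr.
exists mu, f; split => //.
- move=> i; have /andP[lam_ge0 lam_le1] := lam01 i; rewrite /mu.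
  by case: (i == j); apply/andP; split; nra.
- by move: sum01 => /andP[? ?]; rewrite sum_mu; apply/andP; split; nra.
apply: functional_extensionality => x; rewrite sum_mu.
have sum_mu_g : \sum_(i < d) mu i * g i x =
    t * g j x + (1 - t) * \sum_(i < d) lam i * g i x.
  rewrite -(big_pred1_eq +%R j (fun i => t * g i x)) big_mkcond mulr_sumr -big_split.
  by apply: eq_bigr => i _; rewrite /mu; case: eqP => _ /=; ring.
rewrite sum_mu_g; ring.
Qed.

End StarHull.

Theorem lemma1 (R : realFieldType) (T : Type) (F : (T -> R) -> Prop)
  (n : nat) (Xs : 'I_n -> T) (Ys : 'I_n -> R)
  (d : nat) (hd : (0 < d)%N) (g : 'I_d -> T -> R) (Delta1 : R) (ft : T -> R) :
  (forall i, is_Delta_ERM Xs Ys F Delta1 (g i)) ->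
  is_Delta_ERM Xs Ys (Star F g) 0 ft ->
  forall h, F h ->
    emp_risk Xs Ys h - emp_risk Xs Ys ft >= 18%:R^-1 * emp_dist Xs ft h - 2%:R * Delta1.
Proof.
move=> g_ERM [Star_ft ft_ERM] h Fh.
set j := Ordinal hd; have [_ gj_ERM] := g_ERM j.
have Delta1_ge0 := Delta_ERM_ge0 (g_ERM j).
have half01 : 0 <= (2^-1 : R) <= 1 by apply/andP; split; lra.
have ft_le_mid_h := ft_ERM _ (Star_convex_center j half01 (Star_class g Fh)).
have ft_le_mid_ft := ft_ERM _ (Star_convex_center j half01 Star_ft).
rewrite !emp_risk_convex_comb [emp_dist _ _ ft]emp_distC in ft_le_mid_h ft_le_mid_ft.
have gj_le_h := gj_ERM _ Fh.
have ft_h_le := emp_dist_triangle Xs ft (g j) h.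
have := emp_dist_ge0 Xs (g j) h; have := emp_dist_ge0 Xs ft (g j).
lra.
Qed.
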